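(* Let $\mathcal{C}$ be an additive category, $\mathbb{E}:\mathcal{C}^{\mathrm{op}}\times\mathcal{C}\to\mathrm{Ab}$ a biadditive functor, and $\mathcal{I}$ an ideal of $\mathcal{C}$. Then $\mathcal{I}^\star$ is an additive subfunctor of $\mathbb{E}$ satisfying $\mathcal{I}\subseteq\mathrm{Ph}(\mathcal{I}^\star)$, and it is minimal with this property: for every additive subfunctor $\mathbb{F}\subseteq\mathbb{E}$ with $\mathcal{I}\subseteq\mathrm{Ph}(\mathbb{F})$ one has $\mathcal{I}^\star\subseteq\mathbb{F}$.
   Context: For $\delta\in\mathbb{E}(C,A)$, $a\in\mathcal{C}(A,A')$, $c\in\mathcal{C}(C',C)$ write $a_\star\delta:=\mathbb{E}(C,a)(\delta)\in\mathbb{E}(C,A')$ and $c^\star\delta:=\mathbb{E}(c,A)(\delta)\in\mathbb{E}(C',A)$. An ideal of $\mathcal{C}$ is a class of morphisms containing all zero morphisms, closed under sums of parallel morphisms and under composition on either side with arbitrary morphisms. An additive subfunctor $\mathbb{F}\subseteq\mathbb{E}$ is a choice of subgroups $\mathbb{F}(C,A)\subseteq\mathbb{E}(C,A)$ stable under all $a_\star$ and $c^\star$. A morphism $\varphi\in\mathcal{C}(X,C)$ is $\mathbb{F}$-phantom if $\varphi^\star\delta\in\mathbb{F}(X,A)$ for every object $A$ and every $\delta\in\mathbb{E}(C,A)$; $\mathrm{Ph}(\mathbb{F})$ denotes the class of $\mathbb{F}$-phantom morphisms. For an ideal $\mathcal{I}$, $\mathcal{I}^\star$ is given by $\mathcal{I}^\star(X,A)=\{i^\star\delta\mid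 C\in\mathcal{C},\ i\in\mathcal{I}(X,C),\ \delta\in\mathbb{E}(C,A)\}$. *)

From HB Require Import structures.
From mathcomp Require Import all_boot all_algebra.
Set Implicit Arguments. Unset Strict Implicit. Unset Printing Implicit Defensive.
Import GRing.Theory.
Local Open Scope ring_scope.

Record AddCat := {
  Obj :> Type;
  Hom : Obj -> Obj -> zmodType;
  comp : forall X Y Z : Obj, Hom Y Z -> Hom X Y -> Hom X Z;
  idm : forall X : Obj, Hom X X;
  comp_assoc : forall X Y Z W (h : Hom Z W) (g : Hom Y Z) (f : Hom X Y),
      comp h (comp g f) = comp (comp h g) f;
  comp_id_l : forall X Y (f : Hom X Y), comp (idm Y) f = f;
  comp_id_r : forall X Y (f : Hom X Y), comp f (idm X) = f;
  comp_addl : forall X Y Z (g1 g2 : Hom Y Z) (f : Hom X Y),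
      comp (g1 + g2) f = comp g1 f + comp g2 f;
  comp_addr : forall X Y Z (g : Hom Y Z) (f1 f2 : Hom X Y),
      comp g (f1 + f2) = comp g f1 + comp g f2;
  zero_obj : Obj;
  zero_obj_init : forall X (f : Hom zero_obj X), f = 0;
  zero_obj_term : forall X (f : Hom X zero_obj), f = 0;
  biprod : Obj -> Obj -> Obj;
  bp_in1 : forall A B, Hom A (biprod A B);
  bp_in2 : forall A B, Hom B (biprod A B);
  bp_pr1 : forall A B, Hom (biprod A B) A;
  bp_pr2 : forall A B, Hom (biprod A B) B;
  bp_pr1_in1 : forall A B, comp (bp_pr1 A B) (bp_in1 A B) = idm A;
  bp_pr2_in2 : forall A B, comp (bp_pr2 A B) (bp_in2 A B) = idm B;
  bp_pr1_in2 : forall A B, comp (bp_pr1 A B) (bp_in2 A B) = 0;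
  bp_pr2_in1 : forall A B, comp (bp_pr2 A B) (bp_in1 A B) = 0;
  bp_sum : forall A B, comp (bp_in1 A B) (bp_pr1 A B)
                       + comp (bp_in2 A B) (bp_pr2 A B) = idm (biprod A B)
}.

Arguments comp {_ X Y Z}.
Arguments idm {_}.

(* A biadditive functor E : C^op x C -> Ab, given by its two (commuting)
   partial actions:  push a = E(C,a) = a_*,  pull c = E(c,A) = c^*. *)
Record Biadd (C : AddCat) := {
  Ext : C -> C -> zmodType;
  push : forall (Cc A A' : C), Hom A A' -> Ext Cc A -> Ext Cc A';
  pull : forall (Cc' Cc A : C), Hom Cc' Cc -> Ext Cc A -> Ext Cc' A;
  push_add : forall Cc A A' (a : Hom A A') (d1 d2 : Ext Cc A),
      push a (d1 + d2) = push a d1 + push a d2;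
  pull_add : forall Cc' Cc A (c : Hom Cc' Cc) (d1 d2 : Ext Cc A),
      pull c (d1 + d2) = pull c d1 + pull c d2;
  push_id : forall Cc A (d : Ext Cc A), push (idm A) d = d;
  pull_id : forall Cc A (d : Ext Cc A), pull (idm Cc) d = d;
  push_comp : forall Cc A A' A'' (a : Hom A A') (a' : Hom A' A'') (d : Ext Cc A),
      push (comp a' a) d = push a' (push a d);
  pull_comp : forall Cc'' Cc' Cc A (c : Hom Cc' Cc) (c' : Hom Cc'' Cc') (d : Ext Cc A),
      pull (comp c c') d = pull c' (pull c d);
  push_pull : forall Cc' Cc A A' (c : Hom Cc' Cc) (a : Hom A A') (d : Ext Cc A),
      push a (pull c d) = pull c (push a d);
  push_addm : forall Cc A A' (a1 a2 : Hom A A') (d : Ext Cc A),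
      push (a1 + a2) d = push a1 d + push a2 d;
  pull_addm : forall Cc' Cc A (c1 c2 : Hom Cc' Cc) (d : Ext Cc A),
      pull (c1 + c2) d = pull c1 d + pull c2 d
}.

Arguments Ext {C}.
Arguments push {_ _ Cc A A'}.
Arguments pull {_ _ Cc' Cc A}.

Definition MorClass (C : AddCat) := forall X Y : C, Hom X Y -> Prop.

Definition is_ideal (C : AddCat) (I : MorClass C) : Prop :=
  (forall X Y : C, I X Y 0) /\
  (forall X Y (f g : Hom X Y), I X Y f -> I X Y g -> I X Y (f + g)) /\
  (forall X Y Z (g : Hom Y Z) (f : Hom X Y), I X Y f -> I X Z (comp g f)) /\
  (forall X Y Z (g : Hom Y Z) (f : Hom X Y), I Y Z g -> I X Z (comp g f)).

Definition SubE (C : AddCat) (E : Biadd C) := forall Cc A : C, Ext E Cc A -> Prop.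

Definition is_subgroup (G : zmodType) (S : G -> Prop) : Prop :=
  S 0 /\ (forall x y, S x -> S y -> S (x - y)).

Definition is_add_subfunctor (C : AddCat) (E : Biadd C) (F : SubE E) : Prop :=
  (forall Cc A : C, is_subgroup (F Cc A)) /\
  (forall Cc A A' (a : Hom A A') d, F Cc A d -> F Cc A' (push a d)) /\
  (forall Cc' Cc A (c : Hom Cc' Cc) d, F Cc A d -> F Cc' A (pull c d)).

Definition Ph (C : AddCat) (E : Biadd C) (F : SubE E) : MorClass C :=
  fun X Cc (phi : Hom X Cc) => forall (A : C) (d : Ext E Cc A), F X A (pull phi d).

Definition Istar (C : AddCat) (E : Biadd C) (I : MorClass C) : SubE E :=
  fun X A (d : Ext E X A) =>
    exists (Cc : C) (i : Hom X Cc) (d' : Ext E Cc A), I X Cc i /\ d = pull i d'.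

Definition mc_sub (C : AddCat) (I J : MorClass C) : Prop :=
  forall X Y (f : Hom X Y), I X Y f -> J X Y f.

Definition sube_sub (C : AddCat) (E : Biadd C) (F G : SubE E) : Prop :=
  forall Cc A (d : Ext E Cc A), F Cc A d -> G Cc A d.
Arguments Istar {C} E I.

(* Sums in [I^*] are handled with biproducts:
   [i1^* d1 + i2^* d2 = (in1 i1 + in2 i2)^* (pr1^* d1 + pr2^* d2)], and
   [in1 i1 + in2 i2] lies in the ideal.  Stability under [a_*] comes from
   [a_* i^* = i^* a_*], under [c^*] from [c^* i^* = (i c)^*] with [i c] in the
   ideal.  Minimality is the definition of phantom morphisms read backwards:
   [i^* d] lies in [F] as soon as [i] is [F]-phantom. *)
From Pilot Require Import Defs.
From mathcomp Require Import all_boot all_algebra.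
Import GRing.Theory.
Local Open Scope ring_scope.

Section AdditiveMaps.

Variables (U V : zmodType) (f : U -> V).
Hypothesis fD : {morph f : x y / x + y}.

Lemma addf_morph0 : f 0 = 0.
Proof. by apply: (addrI (f 0)); rewrite -fD !addr0. Qed.

Lemma addf_morphN : {morph f : x / - x}.
Proof. by move=> x; apply: (addrI (f x)); rewrite -fD !subrr addf_morph0. Qed.

End AdditiveMaps.

Arguments addf_morph0 {U V f}.
Arguments addf_morphN {U V f}.

Section Biproducts.

Variable C : AddCat.

Lemma comp0m (X Y Z : C) (f : Defs.Hom X Y) :
  Defs.comp (0 : Defs.Hom Y Z) f = 0.
Proof.
exact: (@addf_morph0 _ _ (fun g : Defs.Hom Y Z => Defs.comp g f)
                        (fun g1 g2 => comp_addl g1 g2 f)).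
Qed.

Definition bp_pair {X A B : C} (f : Defs.Hom X A) (g : Defs.Hom X B) :
  Defs.Hom X (biprod A B) :=
  Defs.comp (bp_in1 A B) f + Defs.comp (bp_in2 A B) g.

Variables (X A B : C) (f : Defs.Hom X A) (g : Defs.Hom X B).

Lemma bp_pr1_pair : Defs.comp (bp_pr1 A B) (bp_pair f g) = f.
Proof.
by rewrite comp_addr !comp_assoc bp_pr1_in1 bp_pr1_in2 comp_id_l comp0m addr0.
Qed.

Lemma bp_pr2_pair : Defs.comp (bp_pr2 A B) (bp_pair f g) = g.
Proof.
by rewrite comp_addr !comp_assoc bp_pr2_in1 bp_pr2_in2 comp_id_l comp0m add0r.
Qed.

Lemma pull_bp_pair (E : Biadd C) (Y : C) (d1 : Ext E A Y) (d2 : Ext E B Y) :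
  pull (bp_pair f g) (pull (bp_pr1 A B) d1 + pull (bp_pr2 A B) d2)
  = pull f d1 + pull g d2.
Proof. by rewrite pull_add -!pull_comp bp_pr1_pair bp_pr2_pair. Qed.

End Biproducts.

Arguments bp_pair {C X A B}.

Section PullbackSubfunctor.

Variables (C : AddCat) (E : Biadd C) (I : MorClass C).

Lemma sub_Ph_Istar : mc_sub I (Ph (Istar E I)).
Proof. by move=> X Y i Ii A d; exists Y, i, d. Qed.

Lemma Istar_sub_of_Ph (F : SubE E) :
  mc_sub I (Ph F) -> sube_sub (Istar E I) F.
Proof. by move=> IPh X A _ [Y [i [d [Ii ->]]]]; exact: IPh. Qed.

Hypothesis I_ideal : is_ideal I.

Lemma ideal_bp_pair (X A B : C) (f : Defs.Hom X A) (g : Defs.Hom X B) :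
  I X A f -> I X B g -> I X (biprod A B) (bp_pair f g).
Proof.
case: I_ideal => _ [ID [IcompL _]] If Ig.
by apply: ID; apply: IcompL.
Qed.

Lemma Istar0 (X A : C) : Istar E I X A 0.
Proof.
case: I_ideal => I0 _; exists X, 0, 0; split => //.
by rewrite (addf_morph0 (pull_add _)).
Qed.

Lemma IstarN (X A : C) (d : Ext E X A) :
  Istar E I X A d -> Istar E I X A (- d).
Proof.
case=> Y [i [d' [Ii ->]]]; exists Y, i, (- d'); split => //.
by rewrite (addf_morphN (pull_add _)).
Qed.

Lemma IstarD (X A : C) (d1 d2 : Ext E X A) :
  Istar E I X A d1 -> Istar E I X A d2 -> Istar E I X A (d1 + d2).
Proof.
case=> [Y1 [i1 [d1' [Ii1 ->]]]] [Y2 [i2 [d2' [Ii2 ->]]]].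
exists (biprod Y1 Y2), (bp_pair i1 i2),
  (pull (bp_pr1 Y1 Y2) d1' + pull (bp_pr2 Y1 Y2) d2').
by rewrite pull_bp_pair; split => //; apply: ideal_bp_pair.
Qed.

Lemma Istar_push (X A A' : C) (a : Defs.Hom A A') (d : Ext E X A) :
  Istar E I X A d -> Istar E I X A' (push a d).
Proof.
by case=> Y [i [d' [Ii ->]]]; exists Y, i, (push a d'); rewrite push_pull.
Qed.

Lemma Istar_pull (X' X A : C) (c : Defs.Hom X' X) (d : Ext E X A) :
  Istar E I X A d -> Istar E I X' A (pull c d).
Proof.
case: I_ideal => _ [_ [_ IcompR]] [Y [i [d' [Ii ->]]]].
by exists Y, (Defs.comp i c), d'; rewrite pull_comp; split => //; apply: IcompR.
Qed.

Lemma Istar_add_subfunctor : is_add_subfunctor (Istar E I).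
Proof.
split; last by split; [exact: Istar_push | exact: Istar_pull].
by move=> X A; split=> [|d1 d2 ? ?]; [exact: Istar0 | apply/IstarD/IstarN].
Qed.

End PullbackSubfunctor.

Theorem proposition3p2 (C : AddCat) (E : Biadd C) (I : MorClass C) :
  is_ideal I ->
  [/\ is_add_subfunctor (Istar E I),
      mc_sub I (Ph (Istar E I)) &
      forall F : SubE E, is_add_subfunctor F -> mc_sub I (Ph F) ->
        sube_sub (Istar E I) F].
Proof.
move=> I_ideal; split; first exact: Istar_add_subfunctor.
  exact: sub_Ph_Istar.
by move=> F _; exact: Istar_sub_of_Ph.
Qed.
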